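(* Let $P$ be a convex polytope in $\mathbb{R}^3$ with non-empty interior whose boundary admits a triangulation, using exactly the vertices of $P$ as vertices, that is combinatorially equivalent to the boundary of an octahedron (six vertices, each of degree $4$). Then $$\frac{S(P)^3}{V(P)^2}\geq 108\sqrt{3},$$ with equality if and only if $P$ is a regular octahedron.
   Context: $S(P)$ denotes the surface area and $V(P)$ the volume of $P$. *)

From Stdlib Require Import Reals Lra List.
Import ListNotations.
Open Scope R_scope.

Definition pt : Type := (R * R * R)%type.
Definition px (p : pt) : R := fst (fst p).
Definition py (p : pt) : R := snd (fst p).
Definition pz (p : pt) : R := snd p.
Definition mkpt (x y z : R) : pt := (x, y, z).
Definition origin : pt := mkpt 0 0 0.
Definition vadd (p q : pt) : pt := mkpt (px p + px q) (py p + py q) (pz p + pz q).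
Definition vsub (p q : pt) : pt := mkpt (px p - px q) (py p - py q) (pz p - pz q).
Definition vscale (t : R) (p : pt) : pt := mkpt (t * px p) (t * py p) (t * pz p).
Definition dot (p q : pt) : R := px p * px q + py p * py q + pz p * pz q.
Definition cross (p q : pt) : pt :=
  mkpt (py p * pz q - pz p * py q) (pz p * px q - px p * pz q) (px p * py q - py p * px q).
Definition vnorm (p : pt) : R := sqrt (dot p p).
Definition det3 (a b c : pt) : R := dot a (cross b c).

Definition lincomb (w : list R) (l : list pt) : pt :=
  fold_right (fun tp acc => vadd (vscale (fst tp) (snd tp)) acc) origin (combine w l).
Definition in_hull (l : list pt) (x : pt) : Prop :=
  exists w : list R, length w = length l /\ Forall (fun t => 0 <= t) w /\
    fold_right Rplus 0 w = 1 /\ x = lincomb w l.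

Definition interior_pt (S : pt -> Prop) (x : pt) : Prop :=
  exists eps, 0 < eps /\ forall y, vnorm (vsub y x) < eps -> S y.
Definition boundary_pt (S : pt -> Prop) (x : pt) : Prop :=
  S x /\ ~ interior_pt S x.
Definition extreme_pt (S : pt -> Prop) (x : pt) : Prop :=
  S x /\ forall a b t, S a -> S b -> 0 < t < 1 ->
    x = vadd (vscale t a) (vscale (1 - t) b) -> a = x /\ b = x.

(** The six vertices are v 0, ..., v 5; the combinatorial octahedron has
    antipodal (non-adjacent) pairs {0,1}, {2,3}, {4,5}, and its 8 faces
    (listed with a coherent orientation of the sphere) are the triangles
    taking one vertex from each pair. *)
Definition oct_idx : list nat := [0; 1; 2; 3; 4; 5]%nat.
Definition oct_faces : list (nat * nat * nat) :=
  [(0,2,4); (0,3,5); (1,2,5); (1,3,4); (0,5,2); (0,4,3); (1,4,2); (1,5,3)]%nat.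
Definition face_idx (f : nat * nat * nat) : list nat :=
  let '(a, b, c) := f in [a; b; c].
Definition verts (v : nat -> pt) : list pt := map v oct_idx.

Definition polyP (v : nat -> pt) : pt -> Prop := in_hull (verts v).

Definition face_tri (v : nat -> pt) (f : nat * nat * nat) : pt -> Prop :=
  in_hull (map v (face_idx f)).

Definition common_idx (f g : nat * nat * nat) : list nat :=
  filter (fun i => existsb (Nat.eqb i) (face_idx g)) (face_idx f).

Definition nonempty_interior (v : nat -> pt) : Prop :=
  exists x, interior_pt (polyP v) x.
Definition exactly_vertices (v : nat -> pt) : Prop :=
  (forall i j, In i oct_idx -> In j oct_idx -> v i = v j -> i = j) /\
  (forall x, extreme_pt (polyP v) x <-> exists i, In i oct_idx /\ x = v i).
Definition octahedral_boundary_triangulation (v : nat -> pt) : Prop :=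
  (forall f, In f oct_faces ->
     let '(a, b, c) := f in cross (vsub (v b) (v a)) (vsub (v c) (v a)) <> origin) /\
  (forall x, boundary_pt (polyP v) x <-> exists f, In f oct_faces /\ face_tri v f x) /\
  (forall f g, In f oct_faces -> In g oct_faces -> forall x,
     (face_tri v f x /\ face_tri v g x) <-> in_hull (map v (common_idx f g)) x).

Definition tri_area (a b c : pt) : R := vnorm (cross (vsub b a) (vsub c a)) / 2.
Definition surf_area (v : nat -> pt) : R :=
  fold_right Rplus 0 (map (fun f => let '(a, b, c) := f in tri_area (v a) (v b) (v c)) oct_faces).
Definition volume (v : nat -> pt) : R :=
  Rabs (fold_right Rplus 0 (map (fun f => let '(a, b, c) := f in det3 (v a) (v b) (v c)) oct_faces)) / 6.

Definition is_regular_octahedron (P : pt -> Prop) : Prop :=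
  exists (c u1 u2 u3 : pt) (r : R), 0 < r /\
    dot u1 u1 = 1 /\ dot u2 u2 = 1 /\ dot u3 u3 = 1 /\
    dot u1 u2 = 0 /\ dot u1 u3 = 0 /\ dot u2 u3 = 0 /\
    forall x, P x <-> in_hull
      [vadd c (vscale r u1); vsub c (vscale r u1);
       vadd c (vscale r u2); vsub c (vscale r u2);
       vadd c (vscale r u3); vsub c (vscale r u3)] x.

(* Write [d k = v (2k) - v (2k+1)] for the three diagonals and [D = det (d 0, d 1, d 2)],
   so that [6 V = |D|].  Every face contains exactly one endpoint of each diagonal; for an
   orthonormal frame [e] let [u f = sum_k (+-1) e k] record which endpoints, and let [N f]
   be twice the vector area of [f].  Then [sum_f N f . u f = 2 sum_k c k . e k], where the
   [c k = d (k+1) x d (k+2)] are the cofactor vectors, and [|u f| = sqrt 3] bounds the left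
   side by [2 sqrt 3 S] (Cauchy-Schwarz).  Choosing [e] by Gram-Schmidt on the [c k] makes
   their matrix triangular with positive diagonal [x k], [x 0 x 1 x 2 = det c = D^2], so
   AM-GM gives [27 D^2 <= (sum x)^3 <= 3 sqrt 3 S^3], i.e. [S^3 / V^2 >= 108 sqrt 3].
   At equality every face is orthogonal to its [u f], which forces [v] onto [c -+ L e k].
   [D <> 0] is where the triangulation enters: a direction orthogonal to all diagonals
   would put the midpoint of the highest diagonal on the boundary, inside a face through
   one of its endpoints, making three vertices collinear. *)

From Stdlib Require Import Reals List Permutation Lra Lia Psatz.
Import ListNotations.
Open Scope R_scope.

Lemma pow2_pos x : x <> 0 -> 0 < x ^ 2.
Proof. intros Hx; rewrite <- Rsqr_pow2; apply Rsqr_pos_lt, Hx. Qed.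

Lemma sqrt3_cube : sqrt 3 ^ 3 = 3 * sqrt 3.
Proof. rewrite <- (sqrt_sqrt 3) at 2 by lra; ring. Qed.

Lemma cube_lt a b : 0 <= a < b -> a ^ 3 < b ^ 3.
Proof.
  intros Hab; replace (b ^ 3) with (a ^ 3 + (b - a) * (b * b + a * b + a * a)) by ring.
  assert (0 < (b - a) * (b * b + a * b + a * a)) by (apply Rmult_lt_0_compat; nra); lra.
Qed.

Lemma amgm3 x y z : 0 <= x -> 0 <= y -> 0 <= z -> 27 * (x * y * z) <= (x + y + z) ^ 3.
Proof.
  intros Hx Hy Hz.
  assert (0 <= (x + y + z) * ((x - y) ^ 2 + (y - z) ^ 2 + (z - x) ^ 2)) by
    (apply Rmult_le_pos; [lra|pose proof (pow2_ge_0 (x - y)); pose proof (pow2_ge_0 (y - z));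
                            pose proof (pow2_ge_0 (z - x)); lra]).
  assert (0 <= x * (y - z) ^ 2 + y * (z - x) ^ 2 + z * (x - y) ^ 2) by
    (pose proof (Rmult_le_pos x ((y - z) ^ 2) Hx (pow2_ge_0 _));
     pose proof (Rmult_le_pos y ((z - x) ^ 2) Hy (pow2_ge_0 _));
     pose proof (Rmult_le_pos z ((x - y) ^ 2) Hz (pow2_ge_0 _)); lra).
  nra.
Qed.

(** * Vectors *)

Ltac vec_unfold :=
  unfold origin, det3, dot, cross, vadd, vsub, vscale, mkpt, px, py, pz in *;
  cbn [fst snd] in *.

Lemma pt_ext (p q : pt) : px p = px q -> py p = py q -> pz p = pz q -> p = q.
Proof. destruct p as [[? ?] ?], q as [[? ?] ?]; vec_unfold; intros; subst; reflexivity. Qed.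

Ltac vec_eq := apply pt_ext; vec_unfold; field_simplify; lra.

Ltac pt_coords H :=
  let Hx := fresh H "x" in let Hy := fresh H "y" in let Hz := fresh H "z" in
  pose proof (f_equal px H) as Hx; pose proof (f_equal py H) as Hy;
  pose proof (f_equal pz H) as Hz; vec_unfold.

Ltac in_list := simpl; tauto.

Lemma dot_comm a b : dot a b = dot b a.
Proof. vec_unfold; ring. Qed.

Lemma dot_vadd_l a b c : dot (vadd a b) c = dot a c + dot b c.
Proof. vec_unfold; ring. Qed.
Lemma dot_vsub_l a b c : dot (vsub a b) c = dot a c - dot b c.
Proof. vec_unfold; ring. Qed.
Lemma dot_vsub_r a b c : dot c (vsub a b) = dot c a - dot c b.
Proof. vec_unfold; ring. Qed.
Lemma dot_vscale_l k a c : dot (vscale k a) c = k * dot a c.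
Proof. vec_unfold; ring. Qed.
Lemma dot_vscale_r k a c : dot c (vscale k a) = k * dot c a.
Proof. vec_unfold; ring. Qed.

Lemma dot_self_ge0 p : 0 <= dot p p.
Proof. vec_unfold; nra. Qed.

Lemma dot_self_eq0 p : dot p p = 0 -> p = origin.
Proof. intros H; apply pt_ext; vec_unfold; nra. Qed.

Lemma dot_self_pos p : p <> origin -> 0 < dot p p.
Proof.
  intros Hp; destruct (dot_self_ge0 p) as [|H]; [assumption|].
  now elim Hp; apply dot_self_eq0.
Qed.

Lemma vnorm_sq p : vnorm p * vnorm p = dot p p.
Proof. apply sqrt_sqrt, dot_self_ge0. Qed.

Lemma vnorm_ge0 p : 0 <= vnorm p.
Proof. apply sqrt_pos. Qed.

Lemma dot_cross_cross a b : dot (cross a b) (cross a b) = dot a a * dot b b - dot a b ^ 2.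
Proof. vec_unfold; ring. Qed.

Lemma det3_cross_cross a b c : det3 (cross b c) (cross c a) (cross a b) = det3 a b c ^ 2.
Proof. vec_unfold; ring. Qed.

Lemma det3_sq_gram a b c : det3 a b c ^ 2 =
  dot a a * dot b b * dot c c + 2 * dot a b * dot b c * dot a c
  - dot a a * dot b c ^ 2 - dot b b * dot a c ^ 2 - dot c c * dot a b ^ 2.
Proof. vec_unfold; ring. Qed.

Lemma cauchy_schwarz a b : dot a b <= vnorm a * vnorm b.
Proof.
  destruct (Rle_or_lt (dot a b) 0).
  - pose proof (vnorm_ge0 a); pose proof (vnorm_ge0 b); nra.
  - pose proof (dot_cross_cross a b); pose proof (dot_self_ge0 (cross a b)).
    unfold vnorm; rewrite <- sqrt_mult by apply dot_self_ge0.
    rewrite <- (sqrt_pow2 (dot a b)) by lra.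
    apply sqrt_le_1_alt; lra.
Qed.

Lemma cauchy_schwarz_eq_orth a b d :
  dot a b = vnorm a * vnorm b -> 0 < dot a a -> dot d a = 0 -> dot d b = 0.
Proof.
  intros Heq Ha Hd.
  assert (Hab : 0 < dot a b \/ b = origin).
  { destruct (Req_dec (dot b b) 0) as [Hb|Hb]; [right; now apply dot_self_eq0|left].
    pose proof (dot_self_ge0 b); rewrite Heq.
    apply Rmult_lt_0_compat; apply sqrt_lt_R0; lra. }
  destruct Hab as [Hab| ->]; [|vec_unfold; ring].
  assert (Hcross : cross a b = origin).
  { apply dot_self_eq0; rewrite dot_cross_cross, Heq, <- !vnorm_sq; ring. }
  assert (Id : dot b b * dot d a - dot a b * dot d b = - dot (cross a b) (cross b d))
    by (vec_unfold; ring).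
  rewrite Hcross, Hd in Id; vec_unfold; nra.
Qed.

Lemma orth3_eq_origin a b c z : det3 a b c <> 0 ->
  dot z a = 0 -> dot z b = 0 -> dot z c = 0 -> z = origin.
Proof.
  intros Hd Ha Hb Hc.
  assert (Id : vscale (det3 a b c) z = vadd (vadd (vscale (dot z a) (cross b c))
                 (vscale (dot z b) (cross c a))) (vscale (dot z c) (cross a b)))
    by (apply pt_ext; vec_unfold; ring).
  rewrite Ha, Hb, Hc in Id.
  destruct z as [[x y] z]; apply pt_ext; vec_unfold; injection Id; intros;
    apply (Rmult_eq_reg_l (det3 a b c)); vec_unfold; lra.
Qed.

(* [x] is parallel to [a]: [dot a a * x - dot x a * a] is orthogonal to the whole
   basis [a, b, e]. *)
Lemma orth_basis_line a b e x :
  dot a b = 0 -> dot a e = 0 -> dot b e = 0 -> dot b b = dot a a -> dot e e = dot a a ->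
  0 < dot a a -> dot x b = 0 -> dot x e = 0 -> dot x x = dot a a ->
  x = a \/ x = vscale (-1) a.
Proof.
  intros Hab Hae Hbe Hbb Hee Haa Hxb Hxe Hxx.
  assert (Hdet : det3 a b e <> 0).
  { intros H0; pose proof (det3_sq_gram a b e) as G.
    rewrite H0, Hab, Hae, Hbe, Hbb, Hee in G.
    assert (0 < dot a a * dot a a * dot a a) by (repeat apply Rmult_lt_0_compat; lra); nra. }
  assert (Hz : vsub (vscale (dot a a) x) (vscale (dot x a) a) = origin).
  { apply (orth3_eq_origin a b e); [exact Hdet|..];
      rewrite dot_vsub_l, !dot_vscale_l, ?Hxb, ?Hxe, ?Hab, ?Hae; [|ring|ring].
    rewrite (dot_comm x a); ring. }
  assert (Hpar : vscale (dot a a) x = vscale (dot x a) a)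
    by (apply pt_ext; pt_coords Hz; lra).
  assert (Hsq : (dot x a - dot a a) * (dot x a + dot a a) = 0).
  { apply (f_equal (fun p => dot p p)) in Hpar.
    rewrite !dot_vscale_l, !dot_vscale_r, Hxx in Hpar.
    apply (Rmult_eq_reg_l (dot a a)); [|lra]; nra. }
  remember (dot a a) as rho eqn:Hrho; remember (dot x a) as t eqn:Ht.
  assert (Hx : x = vscale (t / rho) a).
  { apply pt_ext; pt_coords Hpar; (apply (Rmult_eq_reg_l rho); [field_simplify|]; lra). }
  apply Rmult_integral in Hsq as [Hp|Hm]; [left|right]; rewrite Hx.
  - replace (t / rho) with 1 by (replace t with rho by lra; field; lra); vec_eq.
  - replace (t / rho) with (-1) by (replace t with (- rho) by lra; field; lra); reflexivity.
Qed.

Lemma common_normal_of_det3_eq0 a b c : det3 a b c = 0 -> a <> origin ->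
  exists w, w <> origin /\ dot w a = 0 /\ dot w b = 0 /\ dot w c = 0.
Proof.
  intros D0 Ha.
  destruct (Req_dec (dot (cross a b) (cross a b)) 0) as [Zab|Nab].
  2: { exists (cross a b); repeat split; try (vec_unfold; ring).
       - intros E; rewrite E in Nab; apply Nab; vec_unfold; ring.
       - rewrite <- D0; vec_unfold; ring. }
  destruct (Req_dec (dot (cross a c) (cross a c)) 0) as [Zac|Nac].
  2: { exists (cross a c); repeat split; try (vec_unfold; ring).
       - intros E; rewrite E in Nac; apply Nac; vec_unfold; ring.
       - replace 0 with (- det3 a b c) by lra; vec_unfold; ring. }
  (* Now [b] and [c] are multiples of [a], so any normal of [a] will do. *)
  apply dot_self_eq0 in Zab, Zac.
  pose proof (f_equal px Zab); pose proof (f_equal py Zab); pose proof (f_equal pz Zab);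
    pose proof (f_equal px Zac); pose proof (f_equal py Zac); pose proof (f_equal pz Zac).
  destruct a as [[x y] z], b as [[x2 y2] z2], c as [[x3 y3] z3]; vec_unfold.
  destruct (Req_dec (z * z + y * y) 0) as [Hyz|Hyz].
  - exists (- z, 0, x); repeat split; vec_unfold; try nra.
    intros E; apply Ha; injection E; intros; apply pt_ext; vec_unfold; nra.
  - exists (0, z, - y); repeat split; vec_unfold; try nra.
    intros E; apply Hyz; injection E; intros; nra.
Qed.

Definition orthonormal (u1 u2 u3 : pt) : Prop :=
  dot u1 u1 = 1 /\ dot u2 u2 = 1 /\ dot u3 u3 = 1 /\
  dot u1 u2 = 0 /\ dot u1 u3 = 0 /\ dot u2 u3 = 0.

Lemma cross_orthonormal e1 e2 : dot e1 e1 = 1 -> dot e2 e2 = 1 -> dot e1 e2 = 0 ->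
  orthonormal e1 e2 (cross e1 e2).
Proof.
  intros H1 H2 H12; repeat split; try assumption; try (vec_unfold; ring).
  rewrite dot_cross_cross, H1, H2, H12; ring.
Qed.

Section Orthonormal.
Variables u1 u2 u3 : pt.
Hypothesis Hu : orthonormal u1 u2 u3.

Lemma orthonormal_det_neq0 : det3 u1 u2 u3 <> 0.
Proof.
  destruct Hu as (H1 & H2 & H3 & H12 & H13 & H23); intros H.
  pose proof (det3_sq_gram u1 u2 u3) as G.
  rewrite H, H1, H2, H3, H12, H13, H23 in G; lra.
Qed.

Lemma orthonormal_ext p q :
  dot p u1 = dot q u1 -> dot p u2 = dot q u2 -> dot p u3 = dot q u3 -> p = q.
Proof.
  intros E1 E2 E3.
  assert (Z : vsub p q = origin).
  { apply (orth3_eq_origin u1 u2 u3); [exact orthonormal_det_neq0|..];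
      rewrite dot_vsub_l; lra. }
  pose proof (f_equal px Z); pose proof (f_equal py Z); pose proof (f_equal pz Z).
  apply pt_ext; vec_unfold; lra.
Qed.

Lemma orthonormal_expand x :
  x = vadd (vadd (vscale (dot x u1) u1) (vscale (dot x u2) u2)) (vscale (dot x u3) u3).
Proof.
  destruct Hu as (H1 & H2 & H3 & H12 & H13 & H23).
  apply orthonormal_ext; rewrite !dot_vadd_l, !dot_vscale_l;
    rewrite ?(dot_comm u2 u1), ?(dot_comm u3 u1), ?(dot_comm u3 u2),
      ?H1, ?H2, ?H3, ?H12, ?H13, ?H23; ring.
Qed.

Lemma orthonormal_parseval x y :
  dot x y = dot x u1 * dot y u1 + dot x u2 * dot y u2 + dot x u3 * dot y u3.
Proof.
  rewrite (orthonormal_expand x) at 1.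
  rewrite !dot_vadd_l, !dot_vscale_l, !(dot_comm _ y); ring.
Qed.

Lemma orthonormal_signed_sum_sq s1 s2 s3 :
  let u := vadd (vadd (vscale s1 u1) (vscale s2 u2)) (vscale s3 u3) in
  dot u u = s1 ^ 2 + s2 ^ 2 + s3 ^ 2.
Proof.
  intros u; rewrite orthonormal_parseval; unfold u.
  destruct Hu as (H1 & H2 & H3 & H12 & H13 & H23).
  rewrite !dot_vadd_l, !dot_vscale_l,
    (dot_comm u2 u1), (dot_comm u3 u1), (dot_comm u3 u2), H1, H2, H3, H12, H13, H23; ring.
Qed.

End Orthonormal.

(* Gram-Schmidt on [c1, c2]: the matrix of [c1, c2, c3] in the resulting frame is lower
   triangular, so its diagonal entries multiply to the determinant. *)
Lemma triangular_frame c1 c2 c3 : 0 < det3 c1 c2 c3 ->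
  exists e1 e2, orthonormal e1 e2 (cross e1 e2) /\
    0 < dot c1 e1 /\ 0 < dot c2 e2 /\ 0 < dot c3 (cross e1 e2) /\
    dot c1 e1 * dot c2 e2 * dot c3 (cross e1 e2) = det3 c1 c2 c3.
Proof.
  intros Hd.
  assert (n1 : 0 < dot c1 c1).
  { apply dot_self_pos; intros ->; vec_unfold; lra. }
  set (p := vsub c2 (vscale (dot c2 c1 / dot c1 c1) c1)).
  assert (pc1 : dot p c1 = 0).
  { unfold p; rewrite dot_vsub_l, dot_vscale_l; field; lra. }
  assert (detp : det3 c1 p c3 = det3 c1 c2 c3) by (unfold p; vec_unfold; ring).
  assert (n2 : 0 < dot p p).
  { apply dot_self_pos; intros E; rewrite E in detp; vec_unfold; lra. }
  assert (c2p : dot c2 p = dot p p).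
  { unfold p at 2; rewrite dot_vsub_l, dot_vscale_l, (dot_comm c1 p), pc1, dot_comm; ring. }
  set (s1 := sqrt (dot c1 c1)); set (s2 := sqrt (dot p p)).
  assert (s1p : 0 < s1) by (apply sqrt_lt_R0; lra).
  assert (s2p : 0 < s2) by (apply sqrt_lt_R0; lra).
  assert (s1s : s1 * s1 = dot c1 c1) by (apply sqrt_sqrt; lra).
  assert (s2s : s2 * s2 = dot p p) by (apply sqrt_sqrt; lra).
  exists (vscale (/ s1) c1), (vscale (/ s2) p).
  assert (X : dot c3 (cross (vscale (/ s1) c1) (vscale (/ s2) p)) = / s1 * / s2 * det3 c1 c2 c3)
    by (rewrite <- detp; vec_unfold; ring).
  rewrite X, !dot_vscale_r, c2p, <- s1s, <- s2s.
  split; [apply cross_orthonormal; rewrite !dot_vscale_l, !dot_vscale_r;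
          rewrite ?(dot_comm c1 p), ?pc1, <- ?s1s, <- ?s2s; field; lra|].
  repeat split; [..|field; lra]; apply Rmult_lt_0_compat; try apply Rmult_lt_0_compat;
    try apply Rinv_0_lt_compat; nra.
Qed.

(** * Convex hulls *)

Lemma lincomb_cons t w p l : lincomb (t :: w) (p :: l) = vadd (vscale t p) (lincomb w l).
Proof. reflexivity. Qed.

Lemma lincomb_nil l : lincomb [] l = origin.
Proof. reflexivity. Qed.

Lemma weights_sum_ge0 w : Forall (fun t => 0 <= t) w -> 0 <= fold_right Rplus 0 w.
Proof. induction 1; simpl; lra. Qed.

Lemma lincomb_zero_weights w l : Forall (fun t => 0 <= t) w ->
  fold_right Rplus 0 w = 0 -> lincomb w l = origin.
Proof.
  intros Hw; revert l; induction Hw as [|t w Ht Hw IH]; intros [|p l] Hs; try reflexivity.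
  simpl in Hs; pose proof (weights_sum_ge0 w Hw).
  rewrite lincomb_cons, IH by lra; replace t with 0 by lra; vec_eq.
Qed.

Lemma in_hull_cons q l x : in_hull l x -> in_hull (q :: l) x.
Proof.
  intros (w & Hl & Hw & Hs & ->); exists (0 :: w); simpl; repeat split.
  - now rewrite Hl.
  - constructor; [lra|assumption].
  - lra.
  - rewrite lincomb_cons; vec_eq.
Qed.

Lemma in_hull_head q l : in_hull (q :: l) q.
Proof.
  exists (1 :: repeat 0 (length l)); simpl; rewrite repeat_length.
  assert (Hs : fold_right Rplus 0 (repeat 0 (length l)) = 0)
    by (induction (length l); simpl; lra).
  assert (Hz : Forall (fun t => 0 <= t) (repeat 0 (length l)))
    by (apply Forall_forall; intros t Ht; apply repeat_spec in Ht; lra).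
  split; [reflexivity|split; [constructor; [lra|assumption]|split; [lra|]]].
  rewrite lincomb_cons, lincomb_zero_weights by assumption; vec_eq.
Qed.

Lemma in_hull_mem p l : In p l -> in_hull l p.
Proof.
  induction l as [|q l IH]; simpl; [tauto|].
  intros [->|H]; [apply in_hull_head|apply in_hull_cons, IH, H].
Qed.

Fixpoint mix_weights (t : R) (w1 w2 : list R) : list R :=
  match w1, w2 with
  | a :: r1, b :: r2 => (t * a + (1 - t) * b) :: mix_weights t r1 r2
  | _, _ => []
  end.

Lemma mix_weights_spec t l w1 w2 : 0 <= t <= 1 ->
  length w1 = length l -> length w2 = length l ->
  Forall (fun s => 0 <= s) w1 -> Forall (fun s => 0 <= s) w2 ->
  length (mix_weights t w1 w2) = length l /\
  Forall (fun s => 0 <= s) (mix_weights t w1 w2) /\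
  fold_right Rplus 0 (mix_weights t w1 w2) =
    t * fold_right Rplus 0 w1 + (1 - t) * fold_right Rplus 0 w2 /\
  lincomb (mix_weights t w1 w2) l = vadd (vscale t (lincomb w1 l)) (vscale (1 - t) (lincomb w2 l)).
Proof.
  intros Ht; revert w1 w2; induction l as [|p l IH];
    intros [|a w1] [|b w2] L1 L2 F1 F2; simpl in *; try discriminate.
  - repeat split; [constructor|lra|vec_eq].
  - apply Forall_cons_iff in F1 as [Fa F1]; apply Forall_cons_iff in F2 as [Fb F2].
    destruct (IH w1 w2) as (Q1 & Q2 & Q3 & Q4); try lia; try assumption.
    repeat split.
    + now rewrite Q1.
    + constructor; [nra|assumption].
    + rewrite Q3; ring.
    + rewrite !lincomb_cons, Q4; vec_eq.
Qed.

Lemma in_hull_convex l p q t : in_hull l p -> in_hull l q -> 0 <= t <= 1 ->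
  in_hull l (vadd (vscale t p) (vscale (1 - t) q)).
Proof.
  intros (w1 & L1 & F1 & S1 & ->) (w2 & L2 & F2 & S2 & ->) Ht.
  destruct (mix_weights_spec t l w1 w2) as (Q1 & Q2 & Q3 & Q4); try assumption.
  exists (mix_weights t w1 w2); repeat split; try assumption.
  - rewrite Q3, S1, S2; ring.
  - now rewrite Q4.
Qed.

Definition midpoint (p q : pt) : pt := vscale (1 / 2) (vadd p q).

Lemma midpoint_comm p q : midpoint p q = midpoint q p.
Proof. unfold midpoint; vec_eq. Qed.

Lemma in_hull_midpoint l p q : In p l -> In q l -> in_hull l (midpoint p q).
Proof.
  intros Hp Hq.
  replace (midpoint p q) with (vadd (vscale (1 / 2) p) (vscale (1 - 1 / 2) q))
    by (unfold midpoint; vec_eq).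
  apply in_hull_convex; try apply in_hull_mem; auto; lra.
Qed.

Lemma in_hull_dot_le a M l x : (forall p, In p l -> dot a p <= M) ->
  in_hull l x -> dot a x <= M.
Proof.
  intros Hl (w & Hw & F & S & ->); rewrite <- (Rmult_1_l M), <- S; clear S.
  revert w Hw F; induction l as [|p l IH]; intros [|t w] Hw F; simpl in *; try discriminate.
  - rewrite lincomb_nil; vec_unfold; lra.
  - apply Forall_cons_iff in F as [Ft F].
    rewrite lincomb_cons, dot_comm, dot_vadd_l, dot_vscale_l, dot_comm, (dot_comm _ a).
    specialize (IH (fun r Hr => Hl r (or_intror Hr)) w ltac:(lia) F).
    specialize (Hl p (or_introl eq_refl)); nra.
Qed.

Lemma fold_right_Rplus_perm w w' : Permutation w w' ->
  fold_right Rplus 0 w = fold_right Rplus 0 w'.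
Proof. induction 1; simpl; lra. Qed.

Lemma lincomb_perm l l' : Permutation l l' -> forall w, length w = length l ->
  exists w', Permutation w w' /\ lincomb w' l' = lincomb w l.
Proof.
  induction 1 as [|p l l' _ IH|p q l|l l' l'' H1 IH1 _ IH2].
  - intros w _; exists w; split; [apply Permutation_refl|reflexivity].
  - intros [|t w] Hw; simpl in Hw; [discriminate|].
    destruct (IH w ltac:(lia)) as (w' & Hp & He).
    exists (t :: w'); split; [now constructor|now rewrite !lincomb_cons, He].
  - intros [|t [|s w]] Hw; simpl in Hw; try discriminate.
    exists (s :: t :: w); split; [constructor|rewrite !lincomb_cons; vec_eq].
  - intros w Hw; destruct (IH1 w Hw) as (w' & Hp & He).
    destruct (IH2 w') as (w'' & Hp' & He').
    { rewrite <- (Permutation_length Hp), Hw; apply Permutation_length, H1. }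
    exists w''; split; [eapply perm_trans; eassumption|congruence].
Qed.

Lemma in_hull_perm l l' x : Permutation l l' -> in_hull l x -> in_hull l' x.
Proof.
  intros Hl (w & Hw & F & S & ->).
  destruct (lincomb_perm l l' Hl w Hw) as (w' & Hp & He).
  exists w'; repeat split.
  - now rewrite <- (Permutation_length Hp), <- (Permutation_length Hl).
  - eapply Permutation_Forall; eassumption.
  - now rewrite <- (fold_right_Rplus_perm _ _ Hp).
  - now rewrite He.
Qed.

Lemma in_hull3 a b c x : in_hull [a; b; c] x <->
  exists s t u, 0 <= s /\ 0 <= t /\ 0 <= u /\ s + t + u = 1 /\
    x = vadd (vadd (vscale s a) (vscale t b)) (vscale u c).
Proof.
  split.
  - intros ([|s [|t [|u [|? ?]]]] & Hl & F & S & ->); simpl in Hl; try discriminate.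
    apply Forall_cons_iff in F as [Fs F]; apply Forall_cons_iff in F as [Ft F];
      apply Forall_cons_iff in F as [Fu _].
    simpl in S; exists s, t, u; repeat split; try assumption; [lra|].
    rewrite !lincomb_cons, lincomb_nil; vec_eq.
  - intros (s & t & u & Fs & Ft & Fu & S & ->); exists [s; t; u]; simpl.
    split; [reflexivity|split; [|split; [lra|]]].
    + repeat (apply Forall_cons; [assumption|]); apply Forall_nil.
    + rewrite !lincomb_cons, lincomb_nil; vec_eq.
Qed.

Lemma weights_scale k w : fold_right Rplus 0 (map (Rmult k) w) = k * fold_right Rplus 0 w.
Proof. induction w; simpl; [ring|rewrite IHw; ring]. Qed.

Lemma lincomb_scale k w l : lincomb (map (Rmult k) w) l = vscale k (lincomb w l).
Proof.
  revert l; induction w as [|t w IH]; intros [|p l]; simpl map;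
    rewrite ?lincomb_nil, ?lincomb_cons, ?IH; try vec_eq.
  unfold lincomb; simpl; vec_eq.
Qed.

(* If [x = t q + (1 - t) y] with [y] in the hull of the remaining points, extremality
   forces [x = q] unless [t = 0]. *)
Lemma extreme_in_hull_mem l x : extreme_pt (in_hull l) x -> In x l.
Proof.
  induction l as [|q l IH]; intros [(w & Hl & Hw & Hs & Hx) Hext].
  { destruct w; [simpl in Hs; lra|discriminate]. }
  destruct w as [|t w]; simpl in Hl; [discriminate|].
  apply Forall_cons_iff in Hw as [Ht Hw]; simpl in Hs; rewrite lincomb_cons in Hx.
  pose proof (weights_sum_ge0 w Hw).
  destruct (Req_dec t 1) as [->|N1].
  { left; rewrite Hx, lincomb_zero_weights by (auto; lra); vec_eq. }
  destruct (Req_dec t 0) as [->|N0].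
  - right; apply IH; split.
    + exists w; repeat split; try lia; try assumption; [lra|rewrite Hx; vec_eq].
    + intros a b s Ha Hb Hs' E; apply (Hext a b s); auto using in_hull_cons.
  - left; set (y := lincomb (map (Rmult (/ (1 - t))) w) l).
    assert (Hy : in_hull l y).
    { exists (map (Rmult (/ (1 - t))) w); repeat split.
      - rewrite length_map; lia.
      - apply Forall_map; eapply Forall_impl; [|exact Hw]; intros s Hs'.
        apply Rmult_le_pos; [left; apply Rinv_0_lt_compat; lra|assumption].
      - rewrite weights_scale; replace (fold_right Rplus 0 w) with (1 - t) by lra; field; lra. }
    assert (Tt : 0 < t < 1) by (split; apply Rnot_le_lt; intros Hle; [apply N0|apply N1]; lra).
    destruct (Hext q y t (in_hull_head q l) (in_hull_cons q l y Hy) Tt) as [E _]; [|auto].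
    unfold y; rewrite lincomb_scale, Hx; vec_eq.
Qed.

Lemma not_interior_of_max (S : pt -> Prop) w M x : w <> origin ->
  (forall y, S y -> dot w y <= M) -> dot w x = M -> ~ interior_pt S x.
Proof.
  intros Hw Hle Hx [eps [Heps Hball]].
  pose proof (dot_self_pos w Hw) as Hww.
  assert (Hn : 0 < vnorm w) by (apply sqrt_lt_R0; lra).
  set (k := eps / (2 * vnorm w)).
  assert (Hk : 0 < k) by (unfold k; apply Rdiv_lt_0_compat; lra).
  assert (Hy : S (vadd x (vscale k w))).
  { apply Hball.
    replace (vsub (vadd x (vscale k w)) x) with (vscale k w) by vec_eq.
    unfold vnorm; rewrite dot_vscale_l, dot_vscale_r, <- vnorm_sq.
    replace (k * (k * (vnorm w * vnorm w))) with ((k * vnorm w) ^ 2) by ring.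
    rewrite sqrt_pow2 by nra; unfold k; field_simplify; lra. }
  specialize (Hle _ Hy); rewrite (dot_comm w), dot_vadd_l, dot_vscale_l, (dot_comm x) in Hle.
  nra.
Qed.

(* Three distinct extreme points are never collinear: whichever lies between the other
   two contradicts its extremality. *)
Lemma extreme_midpoint_not_on_segment (S : pt -> Prop) p q r t :
  S p -> extreme_pt S q -> extreme_pt S r -> p <> q -> p <> r -> q <> r -> 0 <= t <= 1 ->
  midpoint p q <> vadd (vscale t p) (vscale (1 - t) r).
Proof.
  intros Sp [Sq Eq] [Sr Er] Npq Npr Nqr Ht E; unfold midpoint in E.
  destruct (Rlt_or_le t (1 / 2)) as [Hlt|Hge].
  - apply Npr; refine (proj1 (Er p q ((1 / 2 - t) / (1 - t)) Sp Sq _ _)).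
    + split; [apply Rdiv_lt_0_compat|apply Rmult_lt_reg_r with (1 - t); field_simplify]; lra.
    + apply pt_ext; pt_coords E; (apply (Rmult_eq_reg_l (1 - t)); [field_simplify; lra|lra]).
  - destruct (Req_dec t 1) as [->|N1]; [apply Npq; apply pt_ext; pt_coords E; lra|].
    destruct (Req_dec t (1 / 2)) as [->|Nh]; [apply Nqr; apply pt_ext; pt_coords E; lra|].
    apply Npq; refine (proj1 (Eq p r (2 * t - 1) Sp Sr _ _)).
    + split; apply Rnot_le_lt; intros Hle; [apply Nh|apply N1]; lra.
    + apply pt_ext; pt_coords E; lra.
Qed.

(* If the midpoint of [p q] lies in a triangle [p y z] on the supporting plane
   [dot w _ = M], the vertex below the plane has weight 0, leaving [p], [q] and the
   other vertex collinear. *)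
Lemma max_midpoint_not_in_triangle (S : pt -> Prop) w M p q y z :
  (forall s, S s -> dot w s <= M) ->
  extreme_pt S p -> extreme_pt S q -> extreme_pt S y -> extreme_pt S z ->
  dot w p = M -> dot w q = M -> dot w y < M \/ dot w z < M ->
  p <> q -> p <> y -> p <> z -> q <> y -> q <> z ->
  ~ in_hull [p; y; z] (midpoint p q).
Proof.
  intros Hle Ep Eq Ey Ez Hp Hq Hyz Npq Npy Npz Nqy Nqz Hm.
  apply in_hull3 in Hm as (a & b & c & Ha & Hb & Hc & Hs & Hm).
  assert (Hlev : dot w (midpoint p q) = a * dot w p + b * dot w y + c * dot w z)
    by (rewrite Hm; vec_unfold; ring).
  assert (Hmid : dot w (midpoint p q) = M)
    by (unfold midpoint; rewrite dot_vscale_r, dot_comm, dot_vadd_l, !(dot_comm _ w); lra).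
  pose proof (Hle y (proj1 Ey)); pose proof (Hle z (proj1 Ez)).
  destruct Hyz as [Hy|Hz].
  - assert (b = 0) as -> by nra.
    apply (extreme_midpoint_not_on_segment S p q z a (proj1 Ep) Eq Ez); try assumption.
    + lra.
    + rewrite Hm; replace (1 - a) with c by lra; vec_eq.
  - assert (c = 0) as -> by nra.
    apply (extreme_midpoint_not_on_segment S p q y a (proj1 Ep) Eq Ey); try assumption.
    + lra.
    + rewrite Hm; replace (1 - a) with b by lra; vec_eq.
Qed.

(** * The combinatorial octahedron *)

Definition antipode (i : nat) : nat := if Nat.even i then S i else pred i.

Lemma antipode_oct i : In i oct_idx -> In (antipode i) oct_idx /\ antipode (antipode i) = i.
Proof. intros Hi; simpl in Hi; repeat destruct Hi as [<-|Hi]; try contradiction; simpl; tauto. Qed.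

Lemma face_idx_oct f i : In f oct_faces -> In i (face_idx f) -> In i oct_idx.
Proof.
  intros Hf Hi; simpl in Hf; repeat destruct Hf as [<-|Hf]; try contradiction; simpl in *; lia.
Qed.

Lemma exactly_vertices_neq v : exactly_vertices v ->
  forall i j, In i oct_idx -> In j oct_idx -> i <> j -> v i <> v j.
Proof. intros [Hinj _] i j Hi Hj Nij E; exact (Nij (Hinj i j Hi Hj E)). Qed.

Ltac perm_by_nodup :=
  apply NoDup_Permutation_bis; unfold antipode; simpl;
  [repeat (apply NoDup_cons; [simpl; lia|]); apply NoDup_nil
  | lia
  | intros x Hx; simpl in *; lia].

(* Each face has one vertex in every antipodal pair; [p] is its vertex in the pair of [a]. *)
Lemma oct_face_transversal f a : In f oct_faces -> In a oct_idx ->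
  exists p y z, (p = a \/ p = antipode a) /\ Permutation [p; y; z] (face_idx f) /\
    Permutation [p; antipode p; y; antipode y; z; antipode z] oct_idx.
Proof.
  intros Hf Ha; simpl in Hf, Ha.
  repeat destruct Hf as [<-|Hf]; try contradiction;
  repeat destruct Ha as [<-|Ha]; try contradiction; unfold face_idx;
  match goal with |- exists p y z, _ /\ Permutation _ [?i; ?j; ?k] /\ _ =>
    first [ exists i, j, k; split; [unfold antipode; simpl; lia|split; perm_by_nodup]
          | exists j, k, i; split; [unfold antipode; simpl; lia|split; perm_by_nodup]
          | exists k, i, j; split; [unfold antipode; simpl; lia|split; perm_by_nodup] ]
  end.
Qed.

(** * Surface area and volume *)

Lemma sum_map_le {A} (g h : A -> R) l : (forall x, In x l -> g x <= h x) ->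
  fold_right Rplus 0 (map g l) <= fold_right Rplus 0 (map h l).
Proof.
  induction l as [|x l IH]; intros H; simpl; [lra|].
  pose proof (H x (or_introl eq_refl)); pose proof (IH (fun y Hy => H y (or_intror Hy))); lra.
Qed.

Lemma sum_map_eq_termwise {A} (g h : A -> R) l : (forall x, In x l -> g x <= h x) ->
  fold_right Rplus 0 (map g l) = fold_right Rplus 0 (map h l) -> forall x, In x l -> g x = h x.
Proof.
  induction l as [|y l IH]; intros H E x Hx; simpl in *; [contradiction|].
  pose proof (sum_map_le g h l (fun z Hz => H z (or_intror Hz))).
  pose proof (H y (or_introl eq_refl)).
  destruct Hx as [<-|Hx]; [lra|apply IH; auto; lra].
Qed.

Lemma sum_map_mul_r {A} (g : A -> R) c l :
  fold_right Rplus 0 (map (fun x => g x * c) l) = fold_right Rplus 0 (map g l) * c.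
Proof. induction l as [|x l IH]; simpl; [ring|rewrite IH; ring]. Qed.

Definition face_normal (v : nat -> pt) (f : nat * nat * nat) : pt :=
  let '(a, b, c) := f in cross (vsub (v b) (v a)) (vsub (v c) (v a)).

Lemma face_normal_neq0 v : octahedral_boundary_triangulation v ->
  forall f, In f oct_faces -> face_normal v f <> origin.
Proof. intros [Hnd _] [[a b] c] Hf; exact (Hnd _ Hf). Qed.

Definition face_sum (g : nat * nat * nat -> R) : R := fold_right Rplus 0 (map g oct_faces).

Definition diag (v : nat -> pt) (k : nat) : pt := vsub (v (2 * k)%nat) (v (2 * k + 1)%nat).

Definition diag_det (v : nat -> pt) : R := det3 (diag v 0) (diag v 1) (diag v 2).

(* Every face contains exactly one endpoint of each diagonal [k]; the sign tells whether it
   is [v (2k)] or [v (2k+1)]. *)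
Definition diag_sign (f : nat * nat * nat) (k : nat) : R :=
  if existsb (Nat.eqb (2 * k)) (face_idx f) then 1 else -1.

Definition face_dir (e1 e2 e3 : pt) (f : nat * nat * nat) : pt :=
  vadd (vadd (vscale (diag_sign f 0) e1) (vscale (diag_sign f 1) e2)) (vscale (diag_sign f 2) e3).

Definition cofactor_trace (v : nat -> pt) (e1 e2 e3 : pt) : R :=
  dot (cross (diag v 1) (diag v 2)) e1 + dot (cross (diag v 2) (diag v 0)) e2 +
  dot (cross (diag v 0) (diag v 1)) e3.

Lemma surf_area_face_sum v : 2 * surf_area v = face_sum (fun f => vnorm (face_normal v f)).
Proof. unfold surf_area, face_sum, tri_area; simpl; lra. Qed.

Lemma volume_diag_det v : volume v = Rabs (diag_det v) / 6.
Proof. unfold volume, diag_det, diag; simpl; do 3 f_equal; vec_unfold; ring. Qed.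

Lemma scaled_ratio_iff S D : 0 < D ->
  (36 * S / D >= 108 * sqrt 3 <-> 3 * sqrt 3 * D <= S) /\
  (36 * S / D = 108 * sqrt 3 <-> S = 3 * sqrt 3 * D).
Proof.
  intros HD; assert (Hk : 0 < 36 / D) by (apply Rdiv_lt_0_compat; lra).
  replace (36 * S / D) with (36 / D * S) by (field; lra).
  replace (108 * sqrt 3) with (36 / D * (3 * sqrt 3 * D)) by (field; lra).
  split; split; intros H.
  - exact (Rmult_le_reg_l _ _ _ Hk (Rge_le _ _ H)).
  - apply Rle_ge, Rmult_le_compat_l; lra.
  - apply (Rmult_eq_reg_l (36 / D)); [exact H|lra].
  - rewrite H; reflexivity.
Qed.

Lemma iso_ratio_diag_det v : diag_det v <> 0 ->
  surf_area v ^ 3 / volume v ^ 2 = 36 * surf_area v ^ 3 / diag_det v ^ 2.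
Proof.
  intros HD; pose proof (pow2_pos _ HD).
  rewrite volume_diag_det; unfold Rdiv; rewrite Rpow_mult_distr, pow2_abs; field; lra.
Qed.

Lemma face_sum_dir v e1 e2 e3 :
  face_sum (fun f => dot (face_normal v f) (face_dir e1 e2 e3 f)) = 2 * cofactor_trace v e1 e2 e3.
Proof.
  unfold face_sum, face_dir, diag_sign, cofactor_trace, diag; simpl; vec_unfold; ring.
Qed.

Lemma diag_sign_sq f k : diag_sign f k ^ 2 = 1.
Proof. unfold diag_sign; destruct existsb; ring. Qed.

Lemma face_dir_norm e1 e2 e3 f : orthonormal e1 e2 e3 -> vnorm (face_dir e1 e2 e3 f) = sqrt 3.
Proof.
  intros Hu; unfold vnorm, face_dir; rewrite orthonormal_signed_sum_sq, !diag_sign_sq by assumption.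
  f_equal; ring.
Qed.

Lemma dot_face_dir x e1 e2 e3 f : dot x (face_dir e1 e2 e3 f) =
  diag_sign f 0 * dot x e1 + diag_sign f 1 * dot x e2 + diag_sign f 2 * dot x e3.
Proof. unfold face_dir; vec_unfold; ring. Qed.

(** * The inequality *)

Definition dirs_normal_to_faces (v : nat -> pt) (e1 e2 e3 : pt) : Prop :=
  forall a b c, In (a, b, c) oct_faces ->
    dot (vsub (v b) (v a)) (face_dir e1 e2 e3 (a, b, c)) = 0 /\
    dot (vsub (v c) (v a)) (face_dir e1 e2 e3 (a, b, c)) = 0.

Section Frame.
Variables e1 e2 e3 : pt.
Hypothesis He : orthonormal e1 e2 e3.

Lemma face_dir_cauchy_schwarz v f :
  dot (face_normal v f) (face_dir e1 e2 e3 f) <= vnorm (face_normal v f) * sqrt 3.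
Proof. rewrite <- (face_dir_norm e1 e2 e3 f He); apply cauchy_schwarz. Qed.

Lemma face_sum_dir_bound v :
  2 * cofactor_trace v e1 e2 e3 <= face_sum (fun f => vnorm (face_normal v f) * sqrt 3) /\
  face_sum (fun f => vnorm (face_normal v f) * sqrt 3) = 2 * (sqrt 3 * surf_area v).
Proof.
  rewrite <- face_sum_dir; split.
  - apply sum_map_le; intros f _; apply face_dir_cauchy_schwarz.
  - pose proof (surf_area_face_sum v) as HS; unfold face_sum in *.
    rewrite sum_map_mul_r, <- HS; ring.
Qed.

Lemma cofactor_trace_le v : cofactor_trace v e1 e2 e3 <= sqrt 3 * surf_area v.
Proof. pose proof (face_sum_dir_bound v); lra. Qed.

Lemma dirs_normal_of_trace_eq v : (forall f, In f oct_faces -> face_normal v f <> origin) ->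
  cofactor_trace v e1 e2 e3 = sqrt 3 * surf_area v -> dirs_normal_to_faces v e1 e2 e3.
Proof.
  intros Hnd Heq a b c Hf.
  destruct (face_sum_dir_bound v) as [_ Hs].
  rewrite <- Heq, <- face_sum_dir in Hs.
  pose proof (sum_map_eq_termwise _ _ _ (fun f _ => face_dir_cauchy_schwarz v f) (eq_sym Hs) _ Hf)
    as Hcs.
  rewrite <- (face_dir_norm e1 e2 e3 (a, b, c) He) in Hcs.
  specialize (Hnd _ Hf); apply dot_self_pos in Hnd.
  split; apply (cauchy_schwarz_eq_orth _ _ _ Hcs Hnd); simpl; vec_unfold; ring.
Qed.

End Frame.

Lemma cofactor_frame v : diag_det v <> 0 ->
  exists e1 e2, orthonormal e1 e2 (cross e1 e2) /\
    0 <= cofactor_trace v e1 e2 (cross e1 e2) /\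
    27 * diag_det v ^ 2 <= cofactor_trace v e1 e2 (cross e1 e2) ^ 3.
Proof.
  intros HD.
  destruct (triangular_frame (cross (diag v 1) (diag v 2)) (cross (diag v 2) (diag v 0))
              (cross (diag v 0) (diag v 1))) as (e1 & e2 & He & H1 & H2 & H3 & Hprod).
  { rewrite det3_cross_cross; apply pow2_pos, HD. }
  rewrite det3_cross_cross in Hprod; fold (diag_det v) in Hprod.
  exists e1, e2; unfold cofactor_trace; split; [exact He|split; [lra|]].
  rewrite <- Hprod; apply amgm3; lra.
Qed.

Lemma surface_cube_ge v : diag_det v <> 0 -> 3 * sqrt 3 * diag_det v ^ 2 <= surf_area v ^ 3.
Proof.
  intros HD; destruct (cofactor_frame v HD) as (e1 & e2 & He & HT0 & HT).
  pose proof (cofactor_trace_le _ _ _ He v) as Hle.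
  pose proof (pow_incr _ _ 3 (conj HT0 Hle)) as Hcube.
  rewrite Rpow_mult_distr, sqrt3_cube in Hcube.
  assert (Hs : 0 < sqrt 3) by (apply sqrt_lt_R0; lra).
  pose proof (sqrt_sqrt 3 ltac:(lra)).
  nra.
Qed.

Lemma dirs_normal_of_surface_cube_eq v :
  (forall f, In f oct_faces -> face_normal v f <> origin) -> diag_det v <> 0 ->
  surf_area v ^ 3 = 3 * sqrt 3 * diag_det v ^ 2 ->
  exists e1 e2, orthonormal e1 e2 (cross e1 e2) /\ dirs_normal_to_faces v e1 e2 (cross e1 e2).
Proof.
  intros Hnd HD Heq; destruct (cofactor_frame v HD) as (e1 & e2 & He & HT0 & HT).
  exists e1, e2; split; [exact He|].
  apply (dirs_normal_of_trace_eq _ _ _ He v Hnd).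
  pose proof (cofactor_trace_le _ _ _ He v) as Hle.
  destruct Hle as [Hlt|]; [exfalso|assumption].
  assert (Hcube : cofactor_trace v e1 e2 (cross e1 e2) ^ 3 < (sqrt 3 * surf_area v) ^ 3)
    by (apply cube_lt; lra).
  rewrite Rpow_mult_distr, sqrt3_cube, Heq in Hcube.
  pose proof (sqrt_sqrt 3 ltac:(lra)); nra.
Qed.

(** * Nondegeneracy *)

Lemma exists_argmax (g : nat -> R) (l : list nat) : l <> [] ->
  exists a, In a l /\ forall i, In i l -> g i <= g a.
Proof.
  induction l as [|x l IH]; intros Hl; [congruence|].
  destruct l as [|y l].
  - exists x; split; [left; reflexivity|intros i [<-|[]]; lra].
  - destruct IH as (a & Ha & Hmax); [discriminate|].
    destruct (Rle_or_lt (g x) (g a)).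
    + exists a; split; [right; exact Ha|intros i [<-|Hi]; [lra|auto]].
    + exists x; split; [left; reflexivity|intros i [<-|Hi]; [lra|]].
      pose proof (Hmax i Hi); lra.
Qed.

Lemma polyP_dot_le v w M : (forall i, In i oct_idx -> dot w (v i) <= M) ->
  forall y, polyP v y -> dot w y <= M.
Proof.
  intros H y; apply in_hull_dot_le; intros p Hp.
  apply in_map_iff in Hp as (i & <- & Hi); auto.
Qed.

Lemma polyP_not_flat v w M : nonempty_interior v -> w <> origin ->
  ~ (forall i, In i oct_idx -> dot w (v i) = M).
Proof.
  intros [x Hx] Hw Hflat.
  assert (Px : polyP v x).
  { destruct Hx as (eps & He & Hb); apply Hb.
    replace (vsub x x) with origin by vec_eq.
    unfold vnorm; replace (dot origin origin) with 0 by (vec_unfold; ring); rewrite sqrt_0; lra. }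
  assert (Hle := polyP_dot_le v w M (fun i Hi => Req_le _ _ (Hflat i Hi))).
  assert (Hge : forall y, polyP v y -> dot (vscale (-1) w) y <= - M)
    by (apply polyP_dot_le; intros i Hi; rewrite dot_vscale_l, Hflat by exact Hi; lra).
  specialize (Hge x Px); rewrite dot_vscale_l in Hge; pose proof (Hle x Px).
  exact (not_interior_of_max _ w M x Hw Hle ltac:(lra) Hx).
Qed.

Lemma antipode_level v w :
  dot w (diag v 0) = 0 -> dot w (diag v 1) = 0 -> dot w (diag v 2) = 0 ->
  forall i, In i oct_idx -> dot w (v (antipode i)) = dot w (v i).
Proof.
  unfold diag; simpl; rewrite !dot_vsub_r; intros W0 W1 W2 i Hi.
  simpl in Hi; repeat destruct Hi as [<-|Hi]; try contradiction; unfold antipode; simpl; lra.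
Qed.

(* A face through the midpoint meets the pair [a, antipode a] in some [p]; its two other
   vertices cannot both be as high as [a], or all six vertices would be. *)
Lemma top_midpoint_not_in_face v w a f : nonempty_interior v -> exactly_vertices v ->
  w <> origin -> (forall i, In i oct_idx -> dot w (v (antipode i)) = dot w (v i)) ->
  In a oct_idx -> (forall i, In i oct_idx -> dot w (v i) <= dot w (v a)) -> In f oct_faces ->
  ~ face_tri v f (midpoint (v a) (v (antipode a))).
Proof.
  intros Hint Hvert Hw Hlevel Ha Hmax Hf Hmf.
  set (M := dot w (v a)) in *.
  destruct (antipode_oct a Ha) as [_ Haa].
  destruct (oct_face_transversal f a Hf Ha) as (p & y & z & Hp & Hface & Hall).
  assert (Hnd : NoDup [p; antipode p; y; antipode y; z; antipode z]).
  { apply (Permutation_NoDup (Permutation_sym Hall)).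
    repeat (apply NoDup_cons; [simpl; lia|]); apply NoDup_nil. }
  apply NoDup_cons_iff in Hnd as [Np Hnd]; apply NoDup_cons_iff in Hnd as [Nq _].
  simpl in Np, Nq.
  assert (Hin : forall i, In i [p; antipode p; y; antipode y; z; antipode z] -> In i oct_idx)
    by (intros i Hi; exact (Permutation_in _ Hall Hi)).
  assert (Hp' : In p oct_idx) by (apply Hin; in_list).
  assert (Hq' : In (antipode p) oct_idx) by (apply Hin; in_list).
  assert (Hy' : In y oct_idx) by (apply Hin; in_list).
  assert (Hz' : In z oct_idx) by (apply Hin; in_list).
  assert (Hx : forall i, In i oct_idx -> extreme_pt (polyP v) (v i))
    by (intros i Hi; apply (proj2 Hvert); exists i; auto).
  pose proof (polyP_dot_le v w M Hmax) as HP.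
  assert (HpM : dot w (v p) = M) by (destruct Hp as [->| ->]; [reflexivity|rewrite Hlevel; auto]).
  assert (HqM : dot w (v (antipode p)) = M) by (rewrite Hlevel; auto).
  assert (Hlow : dot w (v y) < M \/ dot w (v z) < M).
  { destruct (Hmax y Hy') as [|Ey]; [left; assumption|].
    destruct (Hmax z Hz') as [|Ez]; [right; assumption|].
    exfalso; apply (polyP_not_flat v w M Hint Hw); intros i Hi.
    apply (Permutation_in _ (Permutation_sym Hall)) in Hi; simpl in Hi.
    repeat destruct Hi as [<-|Hi]; try contradiction; rewrite ?Hlevel; auto. }
  apply (max_midpoint_not_in_triangle (polyP v) w M (v p) (v (antipode p)) (v y) (v z));
    auto; try (apply (exactly_vertices_neq v Hvert); auto; lia).
  replace (midpoint (v p) (v (antipode p))) with (midpoint (v a) (v (antipode a)))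
    by (destruct Hp as [->| ->]; [reflexivity|rewrite Haa; apply midpoint_comm]).
  exact (in_hull_perm _ _ _ (Permutation_map v (Permutation_sym Hface)) Hmf).
Qed.

(* Otherwise some [w <> 0] is orthogonal to the three diagonals, so each antipodal pair is
   level for [dot w], and the midpoint of a highest pair is a boundary point. *)
Lemma diag_det_neq0 v : nonempty_interior v -> exactly_vertices v ->
  octahedral_boundary_triangulation v -> diag_det v <> 0.
Proof.
  intros Hint Hvert [_ [Hbd _]] HD.
  assert (Hd0 : diag v 0 <> origin).
  { intros E; apply (exactly_vertices_neq v Hvert 0 1); [in_list|in_list|discriminate|].
    unfold diag in E; simpl in E; apply pt_ext; pt_coords E; lra. }
  destruct (common_normal_of_det3_eq0 _ _ _ HD Hd0) as (w & Hw & W0 & W1 & W2).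
  pose proof (antipode_level v w W0 W1 W2) as Hlevel.
  destruct (exists_argmax (fun i => dot w (v i)) oct_idx) as (a & Ha & Hmax); [discriminate|].
  destruct (antipode_oct a Ha) as [Ha' _].
  assert (Hm : boundary_pt (polyP v) (midpoint (v a) (v (antipode a)))).
  { split; [apply in_hull_midpoint; apply in_map; assumption|].
    apply (not_interior_of_max _ w (dot w (v a))); [exact Hw|exact (polyP_dot_le v w _ Hmax)|].
    unfold midpoint; rewrite dot_vscale_r, (dot_comm w), dot_vadd_l, !(dot_comm _ w), Hlevel;
      [lra|exact Ha]. }
  apply Hbd in Hm as (f & Hf & Hmf).
  exact (top_midpoint_not_in_face v w a f Hint Hvert Hw Hlevel Ha Hmax Hf Hmf).
Qed.

(** * Regular octahedra *)

Definition regular_labelling (v : nat -> pt) : Prop :=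
  exists c a1 a2 a3,
    v 0%nat = vadd c a1 /\ v 1%nat = vsub c a1 /\ v 2%nat = vadd c a2 /\
    v 3%nat = vsub c a2 /\ v 4%nat = vadd c a3 /\ v 5%nat = vsub c a3 /\
    dot a1 a2 = 0 /\ dot a1 a3 = 0 /\ dot a2 a3 = 0 /\
    dot a2 a2 = dot a1 a1 /\ dot a3 a3 = dot a1 a1 /\ 0 < dot a1 a1.

(* In the coordinates of the frame, the sixteen orthogonality relations force
   [v (2k) = c - L e_k] and [v (2k+1) = c + L e_k]. *)
Lemma regular_of_dirs_normal v e1 e2 e3 : orthonormal e1 e2 e3 -> v 0%nat <> v 1%nat ->
  dirs_normal_to_faces v e1 e2 e3 -> regular_labelling v.
Proof.
  intros He N01 Hn.
  assert (Hc : forall a b c, In (a, b, c) oct_faces ->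
     let s k := diag_sign (a, b, c) k in
     s 0%nat * (dot (v b) e1 - dot (v a) e1) + s 1%nat * (dot (v b) e2 - dot (v a) e2) +
       s 2%nat * (dot (v b) e3 - dot (v a) e3) = 0 /\
     s 0%nat * (dot (v c) e1 - dot (v a) e1) + s 1%nat * (dot (v c) e2 - dot (v a) e2) +
       s 2%nat * (dot (v c) e3 - dot (v a) e3) = 0).
  { intros a b c Hf; destruct (Hn a b c Hf) as [H1 H2].
    rewrite dot_face_dir, !dot_vsub_l in H1, H2; simpl; lra. }
  pose proof (Hc 0 2 4 ltac:(simpl; tauto))%nat; pose proof (Hc 0 3 5 ltac:(simpl; tauto))%nat;
  pose proof (Hc 1 2 5 ltac:(simpl; tauto))%nat; pose proof (Hc 1 3 4 ltac:(simpl; tauto))%nat;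
  pose proof (Hc 0 5 2 ltac:(simpl; tauto))%nat; pose proof (Hc 0 4 3 ltac:(simpl; tauto))%nat;
  pose proof (Hc 1 4 2 ltac:(simpl; tauto))%nat; pose proof (Hc 1 5 3 ltac:(simpl; tauto))%nat.
  clear Hc Hn; unfold diag_sign in *; simpl in *.
  pose proof He as (H11 & H22 & H33 & H12 & H13 & H23).
  assert (H21 : dot e2 e1 = 0) by (rewrite dot_comm; exact H12).
  assert (H31 : dot e3 e1 = 0) by (rewrite dot_comm; exact H13).
  assert (H32 : dot e3 e2 = 0) by (rewrite dot_comm; exact H23).
  set (c := midpoint (v 0%nat) (v 1%nat)).
  set (L := (dot (v 1%nat) e1 - dot (v 0%nat) e1) / 2).
  assert (HL : L <> 0)
    by (intros HL; apply N01, (orthonormal_ext e1 e2 e3 He); unfold L in HL; lra).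
  exists c, (vscale (- L) e1), (vscale (- L) e2), (vscale (- L) e3).
  rewrite !dot_vscale_l, !dot_vscale_r, H11, H22, H33, H12, H13, H23.
  repeat split; try ring; try (pose proof (pow2_pos L HL); nra);
    apply (orthonormal_ext e1 e2 e3 He); unfold c, midpoint;
    rewrite ?dot_vadd_l, ?dot_vsub_l, !dot_vscale_l, ?dot_vadd_l,
      ?H11, ?H22, ?H33, ?H12, ?H13, ?H23, ?H21, ?H31, ?H32;
    unfold L; lra.
Qed.

Lemma regular_labelling_regular v : regular_labelling v -> is_regular_octahedron (polyP v).
Proof.
  intros (c & a1 & a2 & a3 & V0 & V1 & V2 & V3 & V4 & V5 & H12 & H13 & H23 & H22 & H33 & H11).
  set (r := sqrt (dot a1 a1)).
  assert (Hr : 0 < r) by (apply sqrt_lt_R0; lra).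
  assert (Hrr : r * r = dot a1 a1) by (apply sqrt_sqrt; lra).
  assert (K : forall a, vscale r (vscale (/ r) a) = a) by (intros; vec_eq).
  exists c, (vscale (/ r) a1), (vscale (/ r) a2), (vscale (/ r) a3), r.
  rewrite !dot_vscale_l, !dot_vscale_r, H12, H13, H23, H22, H33, !K, <- V0, <- V1, <- V2, <- V3,
    <- V4, <- V5, <- Hrr.
  repeat split; try (field; lra); auto.
Qed.

Lemma tri_area_orth c x y z rho : dot x y = 0 -> dot x z = 0 -> dot y z = 0 ->
  dot x x = rho -> dot y y = rho -> dot z z = rho -> 0 <= rho ->
  tri_area (vadd c x) (vadd c y) (vadd c z) = sqrt 3 * rho / 2.
Proof.
  intros Hxy Hxz Hyz Hx Hy Hz Hr; unfold tri_area, vnorm.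
  replace (cross (vsub (vadd c y) (vadd c x)) (vsub (vadd c z) (vadd c x)))
    with (cross (vsub y x) (vsub z x)) by vec_eq.
  replace (dot (cross (vsub y x) (vsub z x)) (cross (vsub y x) (vsub z x)))
    with ((dot y y - 2 * dot x y + dot x x) * (dot z z - 2 * dot x z + dot x x)
          - (dot y z - dot x y - dot x z + dot x x) ^ 2) by (vec_unfold; ring).
  rewrite Hxy, Hxz, Hyz, Hx, Hy, Hz.
  replace ((rho - 2 * 0 + rho) * (rho - 2 * 0 + rho) - (0 - 0 - 0 + rho) ^ 2) with (3 * rho ^ 2)
    by ring.
  rewrite sqrt_mult_alt, sqrt_pow2 by lra; lra.
Qed.

Lemma regular_labelling_surface_cube v : regular_labelling v ->
  surf_area v ^ 3 = 3 * sqrt 3 * diag_det v ^ 2.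
Proof.
  intros (c & a1 & a2 & a3 & V0 & V1 & V2 & V3 & V4 & V5 & H12 & H13 & H23 & H22 & H33 & H11).
  set (rho := dot a1 a1) in *.
  assert (H11' : dot a1 a1 = rho) by reflexivity.
  assert (H21 : dot a2 a1 = 0) by (rewrite dot_comm; exact H12).
  assert (H31 : dot a3 a1 = 0) by (rewrite dot_comm; exact H13).
  assert (H32 : dot a3 a2 = 0) by (rewrite dot_comm; exact H23).
  assert (Hneg : forall a, vsub c a = vadd c (vscale (-1) a)) by (intros; vec_eq).
  assert (HS : surf_area v = 4 * sqrt 3 * rho).
  { unfold surf_area; simpl; rewrite V0, V1, V2, V3, V4, V5, !Hneg.
    rewrite !(tri_area_orth c _ _ _ rho) by
      (rewrite ?dot_vscale_l, ?dot_vscale_r; lra).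
    lra. }
  assert (HD : diag_det v = 8 * det3 a1 a2 a3)
    by (unfold diag_det, diag; simpl; rewrite V0, V1, V2, V3, V4, V5; vec_unfold; ring).
  assert (HG : det3 a1 a2 a3 ^ 2 = rho ^ 3)
    by (rewrite det3_sq_gram, H12, H13, H23, H22, H33, H11'; ring).
  rewrite HS, HD, !Rpow_mult_distr, HG, sqrt3_cube; ring.
Qed.

Definition oct_points (c u1 u2 u3 : pt) (r : R) : list pt :=
  [vadd c (vscale r u1); vsub c (vscale r u1); vadd c (vscale r u2);
   vsub c (vscale r u2); vadd c (vscale r u3); vsub c (vscale r u3)].

Definition axis (u1 u2 u3 : pt) (k : nat) : pt :=
  match k with 0%nat => u1 | 1%nat => u2 | _ => u3 end.

Section RegularOctahedron.
Variables (c u1 u2 u3 : pt) (r : R).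
Hypothesis Hr : 0 < r.
Hypothesis Hu : orthonormal u1 u2 u3.

Lemma oct_center_interior : interior_pt (in_hull (oct_points c u1 u2 u3 r)) c.
Proof.
  exists (r / 3); split; [lra|]; intros y Hy.
  pose proof (orthonormal_expand _ _ _ Hu (vsub y c)) as Ex.
  pose proof (orthonormal_parseval _ _ _ Hu (vsub y c) (vsub y c)) as Hn.
  set (t1 := dot (vsub y c) u1) in *; set (t2 := dot (vsub y c) u2) in *;
    set (t3 := dot (vsub y c) u3) in *.
  assert (Hlt : dot (vsub y c) (vsub y c) < r * r / 9).
  { rewrite <- vnorm_sq; pose proof (vnorm_ge0 (vsub y c)); nra. }
  assert (K : forall t, t * t < r * r / 9 -> 0 <= 1 / 6 + t / (2 * r) /\ 0 <= 1 / 6 - t / (2 * r)).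
  { intros t Ht; assert (- (r / 3) < t < r / 3) by (split; nra).
    split; apply Rmult_le_reg_r with (2 * r); try lra; field_simplify; lra. }
  destruct (K t1) as [K1 K1']; [nra|]; destruct (K t2) as [K2 K2']; [nra|];
    destruct (K t3) as [K3 K3']; [nra|].
  clearbody t1 t2 t3.
  exists [1 / 6 + t1 / (2 * r); 1 / 6 - t1 / (2 * r); 1 / 6 + t2 / (2 * r);
          1 / 6 - t2 / (2 * r); 1 / 6 + t3 / (2 * r); 1 / 6 - t3 / (2 * r)].
  split; [reflexivity|split; [repeat (apply Forall_cons; [assumption|]); apply Forall_nil|]].
  split; [simpl; field; lra|].
  unfold oct_points; rewrite !lincomb_cons, lincomb_nil.
  transitivity (vadd c (vsub y c)); [vec_eq|rewrite Ex].
  apply pt_ext; vec_unfold; field; lra.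
Qed.

Lemma oct_point_rep x : In x (oct_points c u1 u2 u3 r) ->
  exists k s, (k < 3)%nat /\ (s = 1 \/ s = -1) /\ x = vadd c (vscale (s * r) (axis u1 u2 u3 k)).
Proof.
  unfold oct_points; simpl; intros Hx.
  repeat destruct Hx as [<-|Hx]; try contradiction;
  [exists 0%nat, 1|exists 0%nat, (-1)|exists 1%nat, 1|exists 1%nat, (-1)|exists 2%nat, 1
  |exists 2%nat, (-1)]; (split; [lia|split; [lra|simpl; vec_eq]]).
Qed.

Lemma axis_dot k l : (k < 3)%nat -> (l < 3)%nat ->
  dot (axis u1 u2 u3 k) (axis u1 u2 u3 l) = if Nat.eqb k l then 1 else 0.
Proof.
  destruct Hu as (H1 & H2 & H3 & H12 & H13 & H23).
  intros Hk Hl; destruct k as [|[|[|k]]]; try lia; destruct l as [|[|[|l]]]; try lia;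
    simpl; rewrite ?(dot_comm u2 u1), ?(dot_comm u3 u1), ?(dot_comm u3 u2); assumption.
Qed.

Lemma oct_points_offsets x y :
  In x (oct_points c u1 u2 u3 r) -> In y (oct_points c u1 u2 u3 r) ->
  dot (vsub x c) (vsub x c) = r ^ 2 /\
  (x = y \/ midpoint x y = c \/ dot (vsub x c) (vsub y c) = 0).
Proof.
  intros Hx Hy.
  destruct (oct_point_rep x Hx) as (k & s & Hk & Hs & ->).
  destruct (oct_point_rep y Hy) as (l & t & Hl & Ht & ->).
  replace (vsub (vadd c (vscale (s * r) (axis u1 u2 u3 k))) c)
    with (vscale (s * r) (axis u1 u2 u3 k)) by vec_eq.
  replace (vsub (vadd c (vscale (t * r) (axis u1 u2 u3 l))) c)
    with (vscale (t * r) (axis u1 u2 u3 l)) by vec_eq.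
  rewrite !dot_vscale_l, !dot_vscale_r, !axis_dot, Nat.eqb_refl by assumption.
  split; [destruct Hs as [-> | ->]; ring|].
  destruct (Nat.eq_dec k l) as [<-|Nkl].
  - destruct Hs as [-> | ->], Ht as [-> | ->];
      [left|right; left; unfold midpoint|right; left; unfold midpoint|left]; vec_eq.
  - right; right; apply Nat.eqb_neq in Nkl; rewrite Nkl; ring.
Qed.

End RegularOctahedron.

Ltac face_edge Hedge f := apply (Hedge f); solve [in_list | discriminate].

(* The offsets [a 0], [a 2], [a 4] form an orthogonal basis; [v 1] shares a face with
   [v 2] and with [v 4], so [a 1] is [+- a 0], and injectivity excludes [a 0].  Likewise
   for the other two pairs. *)
Lemma regular_labelling_of_offsets v c rho :
  (forall i j, In i oct_idx -> In j oct_idx -> v i = v j -> i = j) -> 0 < rho ->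
  (forall i, In i oct_idx -> dot (vsub (v i) c) (vsub (v i) c) = rho) ->
  (forall f i j, In f oct_faces -> In i (face_idx f) -> In j (face_idx f) -> i <> j ->
     dot (vsub (v i) c) (vsub (v j) c) = 0) ->
  regular_labelling v.
Proof.
  intros Hinj Hrho Hnorm0 Hedge0.
  pose (a i := vsub (v i) c).
  assert (Hnorm : forall i, In i oct_idx -> dot (a i) (a i) = rho) by exact Hnorm0.
  assert (Hedge : forall f i j, In f oct_faces -> In i (face_idx f) -> In j (face_idx f) ->
                    i <> j -> dot (a i) (a j) = 0) by exact Hedge0.
  clear Hnorm0 Hedge0.
  assert (Hv : forall i, v i = vadd c (a i)) by (intros; unfold a; vec_eq).
  assert (Hopp : forall i j k m, In i oct_idx -> In j oct_idx -> In k oct_idx -> In m oct_idx ->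
            m <> i -> dot (a i) (a j) = 0 -> dot (a i) (a k) = 0 -> dot (a j) (a k) = 0 ->
            dot (a m) (a j) = 0 -> dot (a m) (a k) = 0 -> a m = vscale (-1) (a i)).
  { intros i j k m Hi Hj Hk Hm Nmi Hij Hik Hjk Hmj Hmk.
    destruct (orth_basis_line (a i) (a j) (a k) (a m)) as [E|E];
      rewrite ?Hnorm by assumption; try assumption; try reflexivity.
    elim Nmi; apply Hinj; [assumption|assumption|rewrite !Hv, E; reflexivity]. }
  assert (E1 : a 1%nat = vscale (-1) (a 0%nat)) by
    (apply Hopp with 2%nat 4%nat; try in_list; try discriminate;
     [face_edge Hedge (0, 2, 4)%nat|face_edge Hedge (0, 2, 4)%nat|face_edge Hedge (0, 2, 4)%nat
     |face_edge Hedge (1, 4, 2)%nat|face_edge Hedge (1, 4, 2)%nat]).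
  assert (E3 : a 3%nat = vscale (-1) (a 2%nat)) by
    (apply Hopp with 0%nat 4%nat; try in_list; try discriminate;
     [face_edge Hedge (0, 2, 4)%nat|face_edge Hedge (0, 2, 4)%nat|face_edge Hedge (0, 2, 4)%nat
     |face_edge Hedge (0, 4, 3)%nat|face_edge Hedge (0, 4, 3)%nat]).
  assert (E5 : a 5%nat = vscale (-1) (a 4%nat)) by
    (apply Hopp with 0%nat 2%nat; try in_list; try discriminate;
     [face_edge Hedge (0, 2, 4)%nat|face_edge Hedge (0, 2, 4)%nat|face_edge Hedge (0, 2, 4)%nat
     |face_edge Hedge (0, 5, 2)%nat|face_edge Hedge (0, 5, 2)%nat]).
  exists c, (a 0%nat), (a 2%nat), (a 4%nat); rewrite !Hv, E1, E3, E5.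
  repeat split; try (face_edge Hedge (0, 2, 4)%nat); rewrite ?Hnorm by in_list;
    try reflexivity; try assumption; vec_eq.
Qed.

(* Two vertices of [P] sharing a face are vertices of the regular octahedron that can be
   neither equal nor antipodal (their midpoint would be the interior centre). *)
Lemma regular_offsets v : exactly_vertices v -> octahedral_boundary_triangulation v ->
  is_regular_octahedron (polyP v) ->
  exists c r, 0 < r /\
    (forall i, In i oct_idx -> dot (vsub (v i) c) (vsub (v i) c) = r ^ 2) /\
    (forall f i j, In f oct_faces -> In i (face_idx f) -> In j (face_idx f) -> i <> j ->
       dot (vsub (v i) c) (vsub (v j) c) = 0).
Proof.
  intros [Hinj Hext] [_ [Hbd _]]
    (c & u1 & u2 & u3 & r & Hr & H11 & H22 & H33 & H12 & H13 & H23 & Hiff).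
  assert (Hu : orthonormal u1 u2 u3) by (repeat split; assumption).
  change (forall x, polyP v x <-> in_hull (oct_points c u1 u2 u3 r) x) in Hiff.
  assert (Hc : interior_pt (polyP v) c).
  { destruct (oct_center_interior c u1 u2 u3 r Hr Hu) as (eps & He & Hb).
    exists eps; split; [exact He|intros y Hy; apply Hiff, Hb, Hy]. }
  assert (Hvert : forall i, In i oct_idx -> In (v i) (oct_points c u1 u2 u3 r)).
  { intros i Hi; apply extreme_in_hull_mem.
    destruct (proj2 (Hext (v i)) (ex_intro _ i (conj Hi eq_refl))) as [Hin Hx].
    split; [now apply Hiff|]; intros p q t Hp Hq; apply Hx; apply Hiff; assumption. }
  exists c, r; split; [exact Hr|split].
  - intros i Hi; exact (proj1 (oct_points_offsets c u1 u2 u3 r Hu _ _ (Hvert i Hi) (Hvert i Hi))).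
  - intros f i j Hf Hi Hj Nij.
    pose proof (face_idx_oct f i Hf Hi) as Hi'; pose proof (face_idx_oct f j Hf Hj) as Hj'.
    destruct (proj2 (oct_points_offsets c u1 u2 u3 r Hu _ _ (Hvert i Hi') (Hvert j Hj')))
      as [E|[E|E]]; [|exfalso|exact E].
    + elim Nij; exact (Hinj i j Hi' Hj' E).
    + assert (Hb : boundary_pt (polyP v) (midpoint (v i) (v j))).
      { apply Hbd; exists f; split; [exact Hf|].
        apply in_hull_midpoint; apply in_map; assumption. }
      rewrite E in Hb; exact (proj2 Hb Hc).
Qed.

Lemma regular_labelling_of_regular v : exactly_vertices v ->
  octahedral_boundary_triangulation v -> is_regular_octahedron (polyP v) -> regular_labelling v.
Proof.
  intros Hvert Htri Hreg.
  destruct (regular_offsets v Hvert Htri Hreg) as (c & r & Hr & Hnorm & Hedge).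
  exact (regular_labelling_of_offsets v c (r ^ 2) (proj1 Hvert) (pow_lt r 2 Hr) Hnorm Hedge).
Qed.

Theorem proposition3 (v : nat -> pt)
  (Hint : nonempty_interior v)
  (Hvert : exactly_vertices v)
  (Htri : octahedral_boundary_triangulation v) :
  surf_area v ^ 3 / volume v ^ 2 >= 108 * sqrt 3 /\
  (surf_area v ^ 3 / volume v ^ 2 = 108 * sqrt 3 <-> is_regular_octahedron (polyP v)).
Proof.
  pose proof (diag_det_neq0 v Hint Hvert Htri) as HD.
  rewrite iso_ratio_diag_det by exact HD.
  destruct (scaled_ratio_iff (surf_area v ^ 3) (diag_det v ^ 2) (pow2_pos _ HD)) as [Hge Heq].
  split; [apply Hge, surface_cube_ge, HD|split].
  - intros Hcube%Heq; apply regular_labelling_regular.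
    destruct (dirs_normal_of_surface_cube_eq v (face_normal_neq0 v Htri) HD Hcube)
      as (e1 & e2 & He & Hn).
    apply (regular_of_dirs_normal v e1 e2 (cross e1 e2) He); [|exact Hn].
    apply (exactly_vertices_neq v Hvert); [in_list|in_list|discriminate].
  - intros Hreg; apply Heq, regular_labelling_surface_cube, regular_labelling_of_regular;
      assumption.
Qed.
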